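(* Let $D\subset\mathbb N^n$ be finite, not contained in any coordinate hyperplane, $p$ a prime, and $\mathbf e,\mathbf e'\in\Sigma_p(D)$ with $V(\mathbf e,\mathbf e')\ne\emptyset$. Then all $V=(v_{\mathbf d})\in V(\mathbf e,\mathbf e')$ have the same weight $w(V)=\sum_{\mathbf d}v_{\mathbf d}$.
   Context: $s_p$ = base-$p$ digit sum. $E_{D,p}(r)$ = set of $U=(u_{\mathbf d})\in\{0,\dots,p^r-1\}^D$ with $\sum u_{\mathbf d}\mathbf d\equiv0\pmod{p^r-1}$ and all coordinates of $\sum u_{\mathbf d}\mathbf d$ positive; $s_p(U)=\sum s_p(u_{\mathbf d})$; $\delta_p(D)=\frac1{p-1}\min_{r\ge1}\min_{U\in E_{D,p}(r)}s_p(U)/r$; minimal means $s_p(U)=(p-1)r\delta_p(D)$. Shift $\delta_r$: $k\mapsto pk\bmod(p^r-1)$ for $k\le p^r-2$, $p^r-1\mapsto p^r-1$, coordinatewise. $\varphi_U(k)=\frac1{p^r-1}\sum\mathbf d(\delta_r^kU)_{\mathbf d}$, $k\in\mathbb Z/r\mathbb Z$; irreducible means $\varphi_U$ injective; $MI_{D,p}$ = minimal irreducible elements of all lengths; $\Sigma_p(D)=\bigcup_{U\in MI_{D,p}}\mathrm{Im}\varphi_U$. $\psi(U)=(u_{\mathbf d}\bmod p)_{\mathbf d}$; $V(\mathbf e,\mathbf e')=\{\psi(U):U\in MI_{D,p},\varphi_U(-1)=\mathbf e,\varphi_U(0)=\mathbf e'\}\subset\{0,\dots,p-1\}^D$. 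*)

From mathcomp Require Import all_boot.
Unset Printing Implicit Defensive.

(* base-p digit sum s_p(k) (for p >= 2 the terms with p^i > k vanish) *)
Definition sp (p k : nat) : nat := \sum_(i < k.+1) ((k %/ p ^ i) %% p).

Section Defs.
Variables (n : nat) (D : seq (n.-tuple nat)) (p : nat).

Notation m := (size D).
Definition dD (i : 'I_m) : n.-tuple nat := tnth (in_tuple D) i.

(* U = (u_d)_{d in D} is a finite function on the indices of D *)
Definition vsum (U : {ffun 'I_m -> nat}) (j : 'I_n) : nat :=
  \sum_(i < m) U i * tnth (dD i) j.

Definition inE (r : nat) (U : {ffun 'I_m -> nat}) : Prop :=
  [/\ 1 <= r,
      (forall i, U i <= p ^ r - 1),
      (forall j, vsum U j = 0 %[mod p ^ r - 1]) &
      (forall j, 0 < vsum U j)].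

Definition spU (U : {ffun 'I_m -> nat}) : nat := \sum_(i < m) sp p (U i).

(* minimal: s_p(U)/r attains min over all r' >= 1, U' in E(r') of s_p(U')/r'
   (equivalently s_p(U) = (p-1) r delta_p(D)) *)
Definition minimalU (r : nat) (U : {ffun 'I_m -> nat}) : Prop :=
  inE r U /\
  forall r' (U' : {ffun 'I_m -> nat}), inE r' U' -> spU U * r' <= spU U' * r.

Definition shiftr (r k : nat) : nat :=
  if k <= p ^ r - 2 then (p * k) %% (p ^ r - 1) else p ^ r - 1.

Definition shiftU (r : nat) (U : {ffun 'I_m -> nat}) : {ffun 'I_m -> nat} :=
  [ffun i => shiftr r (U i)].

(* phi_U(k) for k a representative in nat of k mod r *)
Definition phiU (r : nat) (U : {ffun 'I_m -> nat}) (k : nat) : n.-tuple nat :=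
  [tuple vsum (iter (k %% r) (shiftU r) U) j %/ (p ^ r - 1) | j < n].

Definition irreducibleU (r : nat) (U : {ffun 'I_m -> nat}) : Prop :=
  forall k k', k < r -> k' < r -> phiU r U k = phiU r U k' -> k = k'.

Definition inMI (r : nat) (U : {ffun 'I_m -> nat}) : Prop :=
  minimalU r U /\ irreducibleU r U.

Definition inSigma (e : n.-tuple nat) : Prop :=
  exists r U k, inMI r U /\ phiU r U k = e.

Definition psi (U : {ffun 'I_m -> nat}) : {ffun 'I_m -> nat} :=
  [ffun i => U i %% p].

(* V(e, e'); phi_U(-1) = phi_U(r-1) *)
Definition inV (e e' : n.-tuple nat) (V : {ffun 'I_m -> nat}) : Prop :=
  exists r U, [/\ inMI r U, phiU r U (r - 1) = e, phiU r U 0 = e' & V = psi U].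

Definition weight (V : {ffun 'I_m -> nat}) : nat := \sum_(i < m) V i.

End Defs.
Arguments inSigma {n} D p e.
Arguments inV {n} D p e e' V.
Arguments weight {n D} V.

(* Reducing the digit recurrence p·k = δ(k) + (p^r - 1)·(δ(k) mod p) along the
   cycle of a minimal element U ∈ E(r) shows that the vector of last digits
   ψ(U) satisfies Σ_d ψ(U)_d·d + φ_U(0) = p·φ_U(-1).  Hence any two elements of
   V(e, e') have the same value of Σ_d v_d·d.  Replacing the last digits of U by
   those of another V ∈ V(e, e') therefore gives an element of E(r) again, and
   minimality of U forces w(ψ(U)) ≤ w(V); by symmetry the weights agree. *)
From Pilot Require Import Defs.
From mathcomp Require Import all_boot zify.

Set Implicit Arguments.
Unset Strict Implicit.
Unset Printing Implicit Defensive.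

Section DigitSum.
Variable p : nat.
Hypothesis p_gt1 : 1 < p.

Lemma sum_digits_sp k N : k <= N -> \sum_(i < N) ((k %/ p ^ i) %% p) = sp p k.
Proof.
elim: N => [|N IH] leN.
  have -> : k = 0 by lia.
  by rewrite big_ord0 /sp big_ord_recl big_ord0 div0n mod0n.
case: (leqP k N) => [le_kN|lt_Nk].
  rewrite big_ord_recr /= IH // divn_small ?mod0n ?addn0 //.
  exact: leq_ltn_trans le_kN (ltn_expl _ p_gt1).
have -> : k = N.+1 by lia.
rewrite /sp [in RHS]big_ord_recr /= divn_small ?mod0n ?addn0 //.
exact: ltn_expl.
Qed.

Lemma sp_rec k : sp p k = k %% p + sp p (k %/ p).
Proof.
case: k => [|k]; first by rewrite div0n mod0n.
rewrite {1}/sp big_ord_recl expn0 divn1; congr (_ + _).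
rewrite -(sum_digits_sp (leq_div _ _)).
by apply: eq_bigr => i _; rewrite /= expnS divnMA.
Qed.

Lemma spMD q v : v < p -> sp p (p * q + v) = sp p q + v.
Proof.
move=> lt_vp; have p_gt0 : 0 < p by apply: ltnW.
rewrite sp_rec mulnC modnMDl modn_small // divnMDl // divn_small // addn0.
exact: addnC.
Qed.

End DigitSum.

Section Shift.
Variables p r : nat.
Hypotheses (p_gt1 : 1 < p) (r_gt0 : 0 < r).
Local Notation M := (p ^ r - 1).
Local Notation T := (shiftr p r).

Lemma expn_sub1_gt0 : 0 < M.
Proof. have := ltn_expl r p_gt1; lia. Qed.

Lemma expn_sub1_add1 : M + 1 = p * p ^ r.-1.
Proof. rewrite -expnS prednK //; have := ltn_expl r p_gt1; lia. Qed.

Lemma shiftr_lt k : k < M -> T k = (p * k) %% M.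
Proof. by move=> lt_kM; rewrite /shiftr ifT //; lia. Qed.

Lemma shiftr_M : T M = M.
Proof. have := expn_sub1_gt0; rewrite /shiftr; case: ifP => //; lia. Qed.

Lemma shiftr_ltM k : k < M -> T k < M.
Proof. by move=> lt_kM; rewrite shiftr_lt // ltn_mod expn_sub1_gt0. Qed.

Lemma shiftr_le k : k <= M -> T k <= M.
Proof.
rewrite leq_eqVlt => /orP[/eqP->|/shiftr_ltM/ltnW //].
by rewrite shiftr_M.
Qed.

Lemma shiftr_mod k : k <= M -> T k = p * k %[mod M].
Proof.
rewrite leq_eqVlt => /orP[/eqP->|lt_kM]; first by rewrite shiftr_M modnn modnMl.
by rewrite shiftr_lt // modn_mod.
Qed.

(* The last digit of δ(k) is the digit carried out when multiplying k by p. *)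
Lemma shiftr_carry k : k <= M -> T k + M * (T k %% p) = p * k.
Proof.
rewrite leq_eqVlt => /orP[/eqP->|lt_kM].
  rewrite shiftr_M.
  have -> : M %% p = p - 1.
    have -> : M = p * (p ^ r.-1 - 1) + (p - 1).
      by have := expn_sub1_add1; have := ltn_expl r.-1 p_gt1; nia.
    by rewrite mulnC modnMDl modn_small //; lia.
  nia.
rewrite shiftr_lt //.
set t := (p * k) %% M; set q := (p * k) %/ M.
have Epk : p * k = q * M + t by rewrite /t /q -divn_eq.
have lt_tM : t < M by rewrite /t ltn_mod expn_sub1_gt0.
have lt_qp : q < p.
  by rewrite -(ltn_pmul2r expn_sub1_gt0); nia.
have Et : t + q * p ^ r.-1 * p = k * p + q by have := expn_sub1_add1; nia.
have -> : t %% p = q.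
  by rewrite -(modnMDl (q * p ^ r.-1)) addnC Et modnMDl modn_small.
nia.
Qed.

Lemma iter_shiftr_le k u : u <= M -> iter k T u <= M.
Proof. by move=> le_uM; elim: k => //= k; apply: shiftr_le. Qed.

Lemma iter_shiftr_mod k u : u <= M -> iter k T u = p ^ k * u %[mod M].
Proof.
move=> le_uM; elim: k => [|k IH]; first by rewrite mul1n.
rewrite iterS shiftr_mod ?iter_shiftr_le //.
by rewrite -modnMmr IH modnMmr expnS mulnA.
Qed.

Lemma iter_shiftr_M k : iter k T M = M.
Proof. by elim: k => //= k ->; rewrite shiftr_M. Qed.

Lemma iter_shiftr_ltM k u : u < M -> iter k T u < M.
Proof. by move=> lt_uM; elim: k => //= k; apply: shiftr_ltM. Qed.

Lemma iter_shiftr_period u : u <= M -> iter r T u = u.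
Proof.
rewrite leq_eqVlt => /orP[/eqP->|lt_uM]; first exact: iter_shiftr_M.
have lt_iter := iter_shiftr_ltM r lt_uM.
rewrite -[RHS](modn_small lt_uM) -[LHS](modn_small lt_iter) iter_shiftr_mod 1?ltnW //.
have -> : p ^ r * u = u * M + u by have := expn_sub1_gt0; nia.
by rewrite modnMDl.
Qed.

End Shift.

Section Digits.
Variables (n : nat) (D : seq (n.-tuple nat)) (p : nat).
Hypothesis p_gt1 : 1 < p.
Local Notation m := (size D).
Local Notation vsum := (vsum n D).
Local Notation psi := (psi n D p).
Local Notation shiftU r := (shiftU n D p r).

Lemma vsum_lin (A B C : {ffun 'I_m -> nat}) j :
  (forall i, A i = p * B i + C i) -> vsum A j = p * vsum B j + vsum C j.
Proof.
move=> EA; rewrite /vsum big_distrr -big_split /=; apply: eq_bigr => i _.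
by rewrite EA mulnDl mulnA.
Qed.

Lemma iter_shiftU r k (U : {ffun 'I_m -> nat}) :
  iter k (shiftU r) U = [ffun i => iter k (shiftr p r) (U i)].
Proof.
elim: k => [|k IH]; first by apply/ffunP => i; rewrite ffunE.
by rewrite iterS IH; apply/ffunP => i; rewrite !ffunE.
Qed.

Lemma vsum_shift_carry r (W : {ffun 'I_m -> nat}) j :
  0 < r -> (forall i, W i <= p ^ r - 1) ->
  vsum (shiftU r W) j + (p ^ r - 1) * vsum (psi (shiftU r W)) j = p * vsum W j.
Proof.
move=> r_gt0 W_le; rewrite /vsum !big_distrr -big_split /=.
by apply: eq_bigr => i _; rewrite !ffunE mulnA -mulnDl mulnA shiftr_carry.
Qed.

Section Cycle.
Variables (r : nat) (U : {ffun 'I_m -> nat}).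
Hypothesis U_in : Defs.inE n D p r U.
Local Notation M := (p ^ r - 1).

Lemma iter_shiftU_le k i : iter k (shiftU r) U i <= M.
Proof. by case: U_in => r_gt0 U_le _ _; rewrite iter_shiftU ffunE iter_shiftr_le. Qed.

Lemma shiftU_iter_pred : shiftU r (iter (r - 1) (shiftU r) U) = U.
Proof.
case: U_in => r_gt0 U_le _ _.
rewrite -iterS (_ : (r - 1).+1 = r); last by lia.
by apply/ffunP => i; rewrite iter_shiftU ffunE iter_shiftr_period.
Qed.

Lemma vsum_iter_shiftU k j : k < r ->
  vsum (iter k (shiftU r) U) j = tnth (phiU n D p r U k) j * M.
Proof.
case: U_in => r_gt0 U_le U_cong _ lt_kr.
rewrite /phiU tnth_mktuple modn_small //.
suff dvd : M %| vsum (iter k (shiftU r) U) j by rewrite divnK.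
apply/eqP; rewrite /vsum -modn_summ.
rewrite (eq_bigr (fun i => (p ^ k * (U i * tnth (dD n D i) j)) %% M)); last first.
  move=> i _; rewrite -modnMml iter_shiftU ffunE iter_shiftr_mod //.
  by rewrite modnMml mulnA.
by rewrite modn_summ -big_distrr /= -modnMmr U_cong mod0n muln0 mod0n.
Qed.

Lemma vsum_psi_phiU j :
  vsum (psi U) j + tnth (phiU n D p r U 0) j = p * tnth (phiU n D p r U (r - 1)) j.
Proof.
have r_gt0 : 0 < r by case: U_in.
have M_gt0 := expn_sub1_gt0 p_gt1 r_gt0.
have vsumU : vsum U j = tnth (phiU n D p r U 0) j * M := vsum_iter_shiftU j r_gt0.
have vsumW : vsum (iter (r - 1) (shiftU r) U) j = tnth (phiU n D p r U (r - 1)) j * M.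
  by apply: vsum_iter_shiftU; lia.
have := vsum_shift_carry j r_gt0 (iter_shiftU_le (r - 1)).
rewrite shiftU_iter_pred vsumU vsumW => carry.
apply/eqP; rewrite -(eqn_pmul2l M_gt0); apply/eqP; nia.
Qed.

End Cycle.

Lemma weight_psi_minimal r (U V : {ffun 'I_m -> nat}) : minimalU n D p r U ->
  (forall i, V i < p) -> (forall j, vsum (psi U) j = vsum V j) ->
  weight (psi U) <= weight V.
Proof.
move=> [[r_gt0 U_le U_cong U_pos] U_min] V_digit psiU_V.
have p_gt0 : 0 < p by apply: ltnW.
set Q := [ffun i => U i %/ p].
set U' := [ffun i => p * Q i + V i].
have EU i : U i = p * Q i + psi U i by rewrite !ffunE mulnC -divn_eq.
have EU' i : U' i = p * Q i + V i by rewrite ffunE.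
have vsumU' j : vsum U' j = vsum U j.
  by rewrite (vsum_lin j EU') (vsum_lin j EU) psiU_V.
have U'_le i : U' i <= p ^ r - 1.
  have := U_le i; rewrite EU => le_Ui.
  have lt_Qi : Q i < p ^ r.-1.
    by rewrite -(ltn_pmul2l p_gt0) -expnS prednK //; have := expn_gt0 p r; lia.
  by rewrite EU'; have := V_digit i; have := expn_sub1_add1 p_gt1 r_gt0; nia.
have U'_in : Defs.inE n D p r U' by split=> // j; rewrite vsumU'.
have := U_min r U' U'_in; rewrite leq_pmul2r //.
have -> : spU n D p U = \sum_(i < m) sp p (Q i) + weight (psi U).
  rewrite /spU /weight -big_split /=; apply: eq_bigr => i _.
  by rewrite {1}EU spMD // ffunE ltn_mod.
have -> : spU n D p U' = \sum_(i < m) sp p (Q i) + weight V.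
  rewrite /spU /weight -big_split /=; apply: eq_bigr => i _.
  by rewrite ffunE spMD.
by rewrite leq_add2l.
Qed.

Lemma vsum_inV e e' V : inV D p e e' V ->
  forall j, vsum V j + tnth e' j = p * tnth e j.
Proof.
case=> r [U [[[U_in _] _] <- <- ->]] j.
exact: vsum_psi_phiU.
Qed.

Lemma weight_inV_le e e' V1 V2 :
  inV D p e e' V1 -> inV D p e e' V2 -> weight V1 <= weight V2.
Proof.
move=> V1_in V2_in; have [r [U [[U_min _] _ _ EV1]]] := V1_in.
rewrite EV1; apply: (weight_psi_minimal U_min).
  by case: V2_in => r2 [U2 [_ _ _ ->]] i; rewrite ffunE ltn_mod ltnW.
move=> j; apply/eqP; rewrite -(eqn_add2r (tnth e' j)) -EV1.
by rewrite (vsum_inV V1_in) (vsum_inV V2_in).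
Qed.

End Digits.

Theorem lemma2p15 (n : nat) (D : seq (n.-tuple nat)) (p : nat) :
  uniq D ->
  (forall j : 'I_n, exists2 d, d \in D & tnth d j != 0) ->
  prime p ->
  forall e e' : n.-tuple nat,
    inSigma D p e -> inSigma D p e' ->
    (exists V, inV D p e e' V) ->
    forall V1 V2, inV D p e e' V1 -> inV D p e e' V2 ->
      weight V1 = weight V2.
Proof.
move=> _ _ p_prime e e' _ _ _ V1 V2 V1_in V2_in.
have p_gt1 := prime_gt1 p_prime.
apply/eqP; rewrite eqn_leq.
by rewrite (weight_inV_le p_gt1 V1_in V2_in) (weight_inV_le p_gt1 V2_in V1_in).
Qed.
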